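(* For integers $m\ge1$ and $1\le j\le m-1$, $$d_{j+1,m}=\frac{2m+1}{j+1}\,d_{j,m}-\frac{(m+j)(m+1-j)}{j(j+1)}\,d_{j-1,m}.$$ Also $d_{m,m}=2^{-m}\binom{2m}{m}$ and $d_{m-1,m}=(2m+1)2^{-(m+1)}\binom{2m}{m}$.
   Context: $d_{l,m}=2^{-2m}\sum_{k=l}^{m}2^{k}\binom{2m-2k}{m-k}\binom{m+k}{m}\binom{k}{l}$ for $0\le l\le m$. *)

From HB Require Import structures.
From mathcomp Require Import all_boot all_order all_algebra.
Set Implicit Arguments. Unset Strict Implicit. Unset Printing Implicit Defensive.
Import Order.TTheory GRing.Theory Num.Theory.
Local Open Scope ring_scope.

Definition d (l m : nat) : rat :=
  (2%:R ^- (2 * m)%N) *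
  \sum_(l <= k < m.+1)
     (2%:R ^+ k * ('C((2 * m - 2 * k)%N, (m - k)%N) * 'C((m + k)%N, m)
                  * 'C(k, l))%:R).

From HB Require Import structures.
From mathcomp Require Import all_boot all_order all_algebra.
From mathcomp Require Import ring zify.
Import Order.TTheory GRing.Theory Num.Theory.

(* Write d_{l,m} = 2^{-2m} S_m(l) with S_m(l) = sum_k a_{m,k} C(k,l) and
   a_{m,k} = 2^k C(2m-2k, m-k) C(m+k, m).  The three-term recurrence is the
   identity
     (m-l)(m+l+1) S_m(l) + (l+1)(l+2) S_m(l+2) = (2m+1)(l+1) S_m(l+1),
   proved summand by summand up to a telescoping error:
   - the coefficients satisfy the ratio law
       (m-k)(m+k+1) a_{m,k} = (k+1)(2m-2k-1) a_{m,k+1}            (k < m),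
     a consequence of two binomial identities (central and shifted);
   - the absorption rule k C(k,l) = l C(k,l) + (l+1) C(k,l+1) turns each
     summand of the recurrence into an exact identity up to the terms
     (m-k)(m+k+1) a_{m,k} C(k,l) and k(2m+1-2k) a_{m,k} C(k-1,l), whose sums
     over k agree by the ratio law (an index shift). *)

Lemma bin_sym n k : 'C(n + k, n) = 'C(n + k, k).
Proof. by have := bin_sub (leq_addr k n); rewrite addKn. Qed.

Lemma mul_bin_absorb k l :
  k * 'C(k, l) = l * 'C(k, l) + l.+1 * 'C(k, l.+1).
Proof.
have [le_lk | lt_kl] := leqP l k; last by rewrite !bin_small ?muln0 // ltnW.
by rewrite mul_bin_left -mulnDl addnC subnK.
Qed.

Lemma mul_bin_shift n k :
  k.+1 * 'C((n + k).+1, n) = (n + k).+1 * 'C(n + k, n).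
Proof. by rewrite -addnS bin_sym addnS -mul_bin_diag bin_sym. Qed.

(* C(2p+2, p+1) is twice C(2p+1, p+1), by Pascal's rule and symmetry. *)
Lemma bin_double_odd p : 'C((2 * p).+2, p.+1) = 2 * 'C((2 * p).+1, p.+1).
Proof.
have odd_split : (2 * p).+1 = p.+1 + p by rewrite addSn addnn mul2n.
by rewrite binS {2}odd_split -(bin_sym p.+1 p) -odd_split [RHS]mul2n -addnn.
Qed.

Lemma mul_bin_central p :
  p.+1 * 'C((2 * p).+2, p.+1) = 2 * (2 * p).+1 * 'C(2 * p, p).
Proof. by rewrite bin_double_odd mulnCA -(mul_bin_diag (2 * p).+1) mulnA. Qed.

Definition dcoef (m k : nat) : nat :=
  2 ^ k * 'C(2 * m - 2 * k, m - k) * 'C(m + k, m).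

Lemma dcoef_ratio k p (m := k + p.+1) :
  p.+1 * (m + k).+1 * dcoef m k = k.+1 * (2 * p).+1 * dcoef m k.+1.
Proof.
rewrite /dcoef.
have -> : 2 * m - 2 * k = (2 * p).+2 by rewrite /m; lia.
have -> : m - k = p.+1 by rewrite /m; lia.
have -> : 2 * m - 2 * k.+1 = 2 * p by rewrite /m; lia.
have -> : m - k.+1 = p by rewrite /m; lia.
transitivity
  (2 ^ k * ((m + k).+1 * 'C(m + k, m)) * (p.+1 * 'C((2 * p).+2, p.+1))).
  by ring.
by rewrite mul_bin_central -mul_bin_shift addnS expnS; ring.
Qed.

Local Open Scope ring_scope.

(* S_m(l) = sum_{k <= m} a_{m,k} C(k,l); terms with k < l vanish. *)
Definition dsum (m l : nat) : rat :=
  \sum_(0 <= k < m.+1) ((dcoef m k * 'C(k, l))%N)%:R.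

Lemma d_dsum l m : d l m = 2%:R ^- (2 * m) * dsum m l.
Proof.
rewrite /d /dsum (@big_nat_widenl _ _ _ l 0) //= big_mkcond; congr (_ * _).
apply: eq_bigr => k _; case: leqP => [_ | lt_kl].
  by rewrite /dcoef !natrM natrX !mulrA.
by rewrite bin_small ?muln0.
Qed.

Lemma sum_nat_shift (R : nmodType) (F G : nat -> R) n :
  (forall k, (k < n)%N -> F k = G k.+1) -> F n = 0 -> G 0%N = 0 ->
  \sum_(0 <= k < n.+1) F k = \sum_(0 <= k < n.+1) G k.
Proof.
move=> FG Fn G0; rewrite big_nat_recr //= Fn addr0 big_nat_recl //= G0 add0r.
by apply: eq_big_nat => k /andP[_ lt_kn]; exact: FG.
Qed.

(* The telescoping error terms have equal sums, by the ratio law. *)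
Lemma dsum_telescope m l :
  \sum_(0 <= k < m.+1)
     (m%:R - k%:R) * (m%:R + k%:R + 1) * ((dcoef m k * 'C(k, l))%N)%:R
  = \sum_(0 <= k < m.+1)
     k%:R * (2 * m%:R + 1 - 2 * k%:R) * ((dcoef m k * 'C(k.-1, l))%N)%:R :> rat.
Proof.
apply: sum_nat_shift => [k lt_km | | ]; last 2 first.
- by rewrite subrr !mul0r.
- by rewrite !mul0r.
have [p ->] : exists p, m = (k + p.+1)%N by exists (m - k.+1)%N; lia.
have := congr1 (fun n : nat => n%:R : rat) (dcoef_ratio k p).
move: (dcoef _ k) (dcoef _ k.+1) => a0 a1 /=; rewrite !natrM => ratio.
transitivity (p.+1%:R * (k + p.+1 + k).+1%:R * a0%:R * 'C(k, l)%:R : rat).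
  by ring.
by rewrite ratio; ring.
Qed.

(* The algebraic core of one summand: if c_i stands for C(k, l+i) (times a
   common factor), the two absorption relations imply the recurrence up to
   the error terms of dsum_telescope. *)
Lemma recurrence_term (R : comPzRingType) (m l k c0 c1 c2 : R) :
  k * c0 = l * c0 + (l + 1) * c1 ->
  k * c1 = (l + 1) * c1 + (l + 2) * c2 ->
  (m - l) * (m + l + 1) * c0 + (l + 1) * (l + 2) * c2
    + (2 * m + 1 - 2 * k) * (l + 1) * c1
  = (2 * m + 1) * (l + 1) * c1 + (m - k) * (m + k + 1) * c0.
Proof.
move=> E0 E1; apply/eqP; rewrite -subr_eq0; apply/eqP.
transitivity ((k + l + 1) * (k * c0 - (l * c0 + (l + 1) * c1))
              - (l + 1) * (k * c1 - ((l + 1) * c1 + (l + 2) * c2))).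
  by ring.
by rewrite E0 E1 !subrr !mulr0 subrr.
Qed.

(* recurrence_term instantiated with c_i = a C(k, l+i), using absorption and
   k C(k-1, l) = (l+1) C(k, l+1) for the error term. *)
Lemma recurrence_summand (m l k a : nat) :
  let c i : rat := ((a * 'C(k, i))%N)%:R in
  (m%:R - l%:R) * (m%:R + l%:R + 1) * c l + (l%:R + 1) * (l%:R + 2) * c l.+2
    + k%:R * (2 * m%:R + 1 - 2 * k%:R) * ((a * 'C(k.-1, l))%N)%:R
  = (2 * m%:R + 1) * (l%:R + 1) * c l.+1
    + (m%:R - k%:R) * (m%:R + k%:R + 1) * c l.
Proof.
move=> c.
have absorb i : k%:R * c i = i%:R * c i + (i%:R + 1) * c i.+1.
  transitivity ((a * (k * 'C(k, i)))%N%:R : rat); first by rewrite /c !natrM; ring.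
  by rewrite mul_bin_absorb mulnDr natrD /c !natrM -natr1; ring.
have absorb_next : k%:R * c l.+1 = (l%:R + 1) * c l.+1 + (l%:R + 2) * c l.+2.
  by rewrite absorb -natr1; ring.
have diag : k%:R * ((a * 'C(k.-1, l))%N)%:R = (l%:R + 1) * c l.+1.
  transitivity ((a * (k * 'C(k.-1, l)))%N%:R : rat); first by rewrite !natrM; ring.
  by rewrite mul_bin_diag /c !natrM -natr1; ring.
have -> : k%:R * (2 * m%:R + 1 - 2 * k%:R) * ((a * 'C(k.-1, l))%N)%:R
          = (2 * m%:R + 1 - 2 * k%:R) * (l%:R + 1) * c l.+1.
  by rewrite mulrAC diag; ring.
exact: recurrence_term.
Qed.

Lemma dsum_recurrence m l :
  (m%:R - l%:R) * (m%:R + l%:R + 1) * dsum m l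
    + (l%:R + 1) * (l%:R + 2) * dsum m l.+2
  = (2 * m%:R + 1) * (l%:R + 1) * dsum m l.+1.
Proof.
apply: (addIr (\sum_(0 <= k < m.+1) k%:R * (2 * m%:R + 1 - 2 * k%:R)
                                     * ((dcoef m k * 'C(k.-1, l))%N)%:R)).
rewrite -[in RHS]dsum_telescope /dsum !big_distrr -!big_split /=.
by apply: eq_bigr => k _; exact: recurrence_summand.
Qed.

Lemma d_recurrence m l :
  (m%:R - l%:R) * (m%:R + l%:R + 1) * d l m + (l%:R + 1) * (l%:R + 2) * d l.+2 m
  = (2 * m%:R + 1) * (l%:R + 1) * d l.+1 m.
Proof. by rewrite !d_dsum !(mulrCA _ (2%:R ^- (2 * m))) -mulrDr dsum_recurrence. Qed.

Lemma d_three_term m j : (1 <= j)%N -> (j < m)%N ->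
  d j.+1 m =
    ((2 * m + 1)%:R / j.+1%:R) * d j m
    - (((m + j)%:R * (m + 1 - j)%:R) / (j%:R * j.+1%:R)) * d j.-1 m.
Proof.
case: j => [// | l] _ lt_lm /=.
have := d_recurrence m l.
move: (d l.+2 m) => d2; move: (d l.+1 m) => d1; move: (d l m) => d0 rec.
have -> : (m + 1 - l.+1 = m - l)%N by lia.
rewrite natrB; last by lia.
have nz1 : l%:R + 1 != 0 :> rat by rewrite natr1 pnatr_eq0.
have nz2 : l%:R + 2 != 0 :> rat by rewrite -natrD pnatr_eq0 addn2.
have -> : d2 = ((2 * m%:R + 1) * (l%:R + 1) * d1
                - (m%:R - l%:R) * (m%:R + l%:R + 1) * d0) / ((l%:R + 1) * (l%:R + 2)).
  by rewrite -rec addrC addKr mulrC mulKf ?mulf_neq0.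
have e2 : l.+2%:R = l%:R + 2 :> rat by rewrite -natrD addn2.
rewrite e2 -natr1 natrD natrM natrD -natr1.
by field; rewrite nz2 addrC nz1.
Qed.

Lemma two_pow_neq0 n : 2%:R ^+ n != 0 :> rat.
Proof. by rewrite expf_neq0 // pnatr_eq0. Qed.

(* Boundary value: only k = m contributes to d_{m,m}. *)
Lemma d_diag m : d m m = 2%:R ^- m * 'C(2 * m, m)%:R.
Proof.
rewrite /d big_nat1 !subnn bin0 binn !muln1 mul1n mul2n -addnn exprD invfM.
by rewrite -mulrA mulKf ?two_pow_neq0.
Qed.

(* Boundary value: d_{m-1,m} has the two terms k = m-1 and k = m. *)
Lemma d_subdiag n (m := n.+1) :
  d m.-1 m = (2 * m + 1)%:R * 2%:R ^- m.+1 * 'C(2 * m, m)%:R.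
Proof.
rewrite /m /d big_ltn // big_nat1 /= !subnn bin0 binn binSn.
have -> : 2%:R ^- (2 * n.+1) = (2%:R ^+ n.+1) ^- 2 :> rat by rewrite mulnC exprM.
have -> : (2 * n.+1 - 2 * n = 2)%N by lia.
have -> : (n.+1 - n = 1)%N by lia.
have -> : (n.+1 + n = (2 * n).+1)%N by lia.
have -> : (n.+1 + n.+1 = (2 * n).+2)%N by lia.
have -> : (2 * n.+1 = (2 * n).+2)%N by lia.
rewrite bin1 bin_double_odd !exprS.
have := two_pow_neq0 n; move: (2%:R ^+ n) => t t_neq0.
by field.
Qed.

Theorem mainTheorem14 :
  (forall m j : nat, (1 <= m)%N -> (1 <= j)%N -> (j <= m - 1)%N ->
     d j.+1 m =
       ((2 * m + 1)%:R / j.+1%:R) * d j m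
       - (((m + j)%:R * (m + 1 - j)%:R) / (j%:R * j.+1%:R)) * d j.-1 m)
  /\ (forall m : nat, (1 <= m)%N ->
       d m m = 2%:R ^- m * 'C((2 * m)%N, m)%:R
       /\ d m.-1 m = (2 * m + 1)%:R * 2%:R ^- m.+1 * 'C((2 * m)%N, m)%:R).
Proof.
split.
  by move=> m j m_ge1 j_ge1 j_le; apply: d_three_term => //; lia.
by case=> [// | n] _; split; [exact: d_diag | exact: d_subdiag].
Qed.
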